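(* Let $X_0^*$ be a $\{1,2,\dots\}$-valued random variable with $\mathbf P(X_0^*\ge2)>0$ and $\mathbf E(X_0^*m^{X_0^*})<\infty$, let $p>p_c$, let $X_0$ have law $(1-p)\delta_0+pP_{X_0^*}$, and let $n\ge0$. Then: (i) the functions $s\mapsto \varphi_n(s):=(m-1)sH_n'(s)-H_n(s)$ and $s\mapsto \varphi_n(s)/s$ are non-decreasing on $(0,m]$; (ii) $H_n(m)\le m^{1/(m-1)}\mathrm e^{\delta_n}$; (iii) for all $s\in[1,m]$, $$\frac{H_n(s)^{m-1}}{s}\ge\frac{H_n(m)^{m-1}}{m}\big[1-m(m-s)\,\delta_n\,\mathrm e^{(m-1)\delta_n}\big].$$
   Context: Fix an integer $m\ge2$. Recursive system: $X_{n+1}$ has the law of $(X_{n,1}+\cdots+X_{n,m}-1)^+$, with $X_{n,i}$ independent copies of $X_n$. $p_c:=\frac{1}{1+\mathbf E\{[(m-1)X_0^*-1]m^{X_0^*}\}}$. $H_n(s):=\mathbf E(s^{X_n})$ is the generating function of $X_n$, and $\delta_n:=m(m-1)H_n'(m)-H_n(m)=(m-1)\mathbf E(X_nm^{X_n})-\mathbf E(m^{X_n})$ (which is positive for $p>p_c$). *)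

From Stdlib Require Import Reals Lra Lia ClassicalEpsilon.
Open Scope R_scope.

(* Value of a convergent series (sum_{k>=0} f k); arbitrary if it diverges. *)
Definition ser (f : nat -> R) : R :=
  epsilon (inhabits 0) (fun l => infinite_sum f l).

(* Convolution of two laws on nat (law of the sum of independent variables). *)
Definition conv (a b : nat -> R) (k : nat) : R :=
  sum_f_R0 (fun i => a i * b (k - i)%nat) k.

Fixpoint convpow (a : nat -> R) (j : nat) : nat -> R :=
  match j with
  | O => fun k => if Nat.eqb k 0 then 1 else 0
  | S j' => conv a (convpow a j')
  end.

(* Law of (X_1 + ... + X_m - 1)^+ where X_i are i.i.d. with law a. *)
Definition step (m : nat) (a : nat -> R) (k : nat) : R :=
  let Y := convpow a m in
  if Nat.eqb k 0 then Y 0%nat + Y 1%nat else Y (S k).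

Definition law0 (p : R) (qstar : nat -> R) (k : nat) : R :=
  if Nat.eqb k 0 then 1 - p else p * qstar k.

(* Law of X_n : lawn m p qstar n k = P(X_n = k). *)
Definition lawn (m : nat) (p : R) (qstar : nat -> R) (n : nat) : nat -> R :=
  Nat.iter n (step m) (law0 p qstar).

Definition H (m : nat) (p : R) (qstar : nat -> R) (n : nat) (s : R) : R :=
  ser (fun k => lawn m p qstar n k * s ^ k).

(* s H_n'(s) = E(X_n s^{X_n}). *)
Definition sH' (m : nat) (p : R) (qstar : nat -> R) (n : nat) (s : R) : R :=
  ser (fun k => INR k * lawn m p qstar n k * s ^ k).

Definition phi (m : nat) (p : R) (qstar : nat -> R) (n : nat) (s : R) : R :=
  (INR m - 1) * sH' m p qstar n s - H m p qstar n s.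

Definition delta (m : nat) (p : R) (qstar : nat -> R) (n : nat) : R :=
  phi m p qstar n (INR m).

Definition pc (m : nat) (qstar : nat -> R) : R :=
  1 / (1 + ser (fun k => ((INR m - 1) * INR k - 1) * INR m ^ k * qstar k)).

(* All three claims hold for any law a on the naturals that is "admissible": a >= 0, total
   mass 1, A = E(m^X) and B = E(X m^X) finite, and delta = (m-1) B - A >= 0.  Writing
   G(s) = sum_k a_k s^k, the proof has four parts.
   1. Generating functions: convolution multiplies G and obeys Leibniz's rule for s G'(s), so
      one step of the recursion maps G to Y_0 + (G^m - Y_0)/s; hence delta_(n+1) =
      G_n(m)^(m-1) delta_n, admissibility is preserved, and the initial law is admissible
      exactly because p > p_c.  So the law of every X_n is admissible.
   2. Part (i) is termwise: phi(s) = sum_k ((m-1) k - 1) a_k s^k has nonnegative coefficients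
      except the constant one.
   3. Key estimate: g(s) = (m-1) ln G(s) - ln s - delta s / m is non-increasing on [1, m], as
      g'(s) = phi(s) / (s G(s)) - delta / m <= 0 by (i).  To avoid differentiating a power
      series at the edge of its disc, this is done for the partial sums G_N (with slope
      delta / (m G_N(1)) in place of delta / m) and then N -> oo.
   4. Part (ii) is the key estimate at s = 1; part (iii) follows from e^(-K) >= 1 - K. *)

From Stdlib Require Import Reals Lra Lia ClassicalEpsilon.
From Coquelicot Require Import Coquelicot.
Open Scope R_scope.

Lemma ser_is_series (f : nat -> R) (l : R) : is_series f l -> ser f = l.
Proof.
  intros Hf. apply is_series_Reals in Hf. unfold ser.
  apply (uniqueness_sum f); [|exact Hf].
  apply (epsilon_spec (inhabits 0) (fun l => infinite_sum f l)). now exists l.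
Qed.

Lemma is_series_ser (f : nat -> R) : ex_series f -> is_series f (ser f).
Proof. intros [l Hl]. now rewrite (ser_is_series f l Hl). Qed.

(* Real-valued forms of Coquelicot's lemmas, stated over [R] with [+], [-], [*] so that
   they apply to (and produce goals about) ordinary real expressions. *)
Lemma is_series_ext_R (f g : nat -> R) (l : R) :
  (forall k, f k = g k) -> is_series f l -> is_series g l.
Proof. apply is_series_ext. Qed.

Lemma is_series_add (f g : nat -> R) (lf lg : R) :
  is_series f lf -> is_series g lg -> is_series (fun k => f k + g k) (lf + lg).
Proof. apply (is_series_plus f g). Qed.

Lemma is_series_sub (f g : nat -> R) (lf lg : R) :
  is_series f lf -> is_series g lg -> is_series (fun k => f k - g k) (lf - lg).
Proof. apply (is_series_minus f g). Qed.

Lemma is_series_mul (c : R) (f : nat -> R) (l : R) :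
  is_series f l -> is_series (fun k => c * f k) (c * l).
Proof. apply (is_series_scal_l c f). Qed.

Lemma is_series_le (f g : nat -> R) (lf lg : R) :
  (forall k, f k <= g k) -> is_series f lf -> is_series g lg -> lf <= lg.
Proof.
  intros Hfg Hf Hg.
  apply (is_lim_seq_le (sum_n f) (sum_n g) lf lg); [|exact Hf|exact Hg].
  intros N. rewrite !sum_n_Reals. apply sum_Rle. intros k _. apply Hfg.
Qed.

Lemma partial_sum_le_series (f : nat -> R) (l : R) (N : nat) :
  (forall k, 0 <= f (S k)) -> is_series f l -> sum_f_R0 f N <= l.
Proof.
  intros Hf Hl.
  assert (Hincr : forall d, sum_f_R0 f N <= sum_f_R0 f (N + d)).
  { induction d as [|d IH]; [rewrite Nat.add_0_r; lra|].
    rewrite Nat.add_succ_r. simpl. specialize (Hf (N + d)%nat). lra. }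
  apply (is_lim_seq_le_loc (fun _ => sum_f_R0 f N) (sum_n f) (sum_f_R0 f N) l);
    [|apply is_lim_seq_const|exact Hl].
  exists N. intros n Hn. rewrite sum_n_Reals. replace n with (N + (n - N))%nat by lia. apply Hincr.
Qed.

Lemma ex_series_dominated (f g : nat -> R) :
  (forall k, 0 <= f k <= g k) -> ex_series g -> ex_series f.
Proof.
  intros Hfg. apply (ex_series_le f g). intros k. change (Rabs (f k) <= g k).
  rewrite Rabs_pos_eq; apply Hfg.
Qed.

Lemma is_series_at_0 (c : R) : is_series (fun k => if Nat.eqb k 0 then c else 0) c.
Proof.
  apply is_series_Reals. intros eps Heps. exists 0%nat. intros n _.
  replace (sum_f_R0 _ n) with c; [unfold R_dist; rewrite Rminus_diag, Rabs_R0; lra|].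
  induction n as [|n IH]; [reflexivity|]. rewrite tech5, <- IH. simpl. ring.
Qed.

Lemma is_series_shift (f : nat -> R) (l : R) :
  is_series f l -> is_series (fun k => f (S k)) (l - f 0%nat).
Proof.
  intros Hf. apply is_series_incr_1. unfold plus; simpl.
  now replace (l - f 0%nat + f 0%nat) with l by ring.
Qed.

(* Terms of the generating function G_a(s) = sum_k a_k s^k and of s G_a'(s) = sum_k k a_k s^k. *)
Definition gf_term (a : nat -> R) (s : R) (k : nat) : R := a k * s ^ k.
Definition xgf_term (a : nat -> R) (s : R) (k : nat) : R := INR k * a k * s ^ k.

Lemma gf_term_nonneg (a : nat -> R) (s : R) (k : nat) :
  (forall k, 0 <= a k) -> 0 <= s -> 0 <= gf_term a s k.
Proof. intros Ha Hs. apply Rmult_le_pos; [apply Ha|now apply pow_le]. Qed.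

Lemma xgf_term_nonneg (a : nat -> R) (s : R) (k : nat) :
  (forall k, 0 <= a k) -> 0 <= s -> 0 <= xgf_term a s k.
Proof.
  intros Ha Hs. apply Rmult_le_pos; [apply Rmult_le_pos; [apply pos_INR|apply Ha]|now apply pow_le].
Qed.

Lemma ex_gf_series_le (a : nat -> R) (s t : R) :
  (forall k, 0 <= a k) -> 0 <= s <= t -> ex_series (gf_term a t) -> ex_series (gf_term a s).
Proof.
  intros Ha Hst. apply ex_series_dominated. intros k. split; [apply gf_term_nonneg; auto; lra|].
  apply Rmult_le_compat_l; [apply Ha|]. apply pow_incr; lra.
Qed.

Lemma ex_xgf_series_le (a : nat -> R) (s t : R) :
  (forall k, 0 <= a k) -> 0 <= s <= t -> ex_series (xgf_term a t) -> ex_series (xgf_term a s).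
Proof.
  intros Ha Hst. apply ex_series_dominated. intros k. split; [apply xgf_term_nonneg; auto; lra|].
  apply Rmult_le_compat_l; [apply Rmult_le_pos; [apply pos_INR|apply Ha]|]. apply pow_incr; lra.
Qed.

Lemma conv_gf_term (a b : nat -> R) (s : R) (k : nat) :
  gf_term (conv a b) s k = sum_f_R0 (fun i => gf_term a s i * gf_term b s (k - i)) k.
Proof.
  unfold gf_term, conv. rewrite Rmult_comm, scal_sum. apply sum_eq. intros i Hi.
  replace (s ^ k) with (s ^ i * s ^ (k - i)) by (rewrite <- pow_add; f_equal; lia). ring.
Qed.

(* ... and s G' obeys Leibniz's rule: k = i + (k - i). *)
Lemma conv_xgf_term (a b : nat -> R) (s : R) (k : nat) :
  xgf_term (conv a b) s k =
  sum_f_R0 (fun i => xgf_term a s i * gf_term b s (k - i)) k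
  + sum_f_R0 (fun i => gf_term a s i * xgf_term b s (k - i)) k.
Proof.
  unfold gf_term, xgf_term, conv. rewrite <- plus_sum.
  replace (INR k * sum_f_R0 (fun i => a i * b (k - i)%nat) k * s ^ k)
    with (INR k * s ^ k * sum_f_R0 (fun i => a i * b (k - i)%nat) k) by ring.
  rewrite scal_sum. apply sum_eq. intros i Hi.
  replace (s ^ k) with (s ^ i * s ^ (k - i)) by (rewrite <- pow_add; f_equal; lia).
  rewrite (minus_INR k i Hi). ring.
Qed.

Lemma convpow_nonneg (a : nat -> R) (j : nat) :
  (forall k, 0 <= a k) -> forall k, 0 <= convpow a j k.
Proof.
  intros Ha. induction j as [|j IH]; intros k; simpl.
  - destruct (Nat.eqb k 0); lra.
  - apply cond_pos_sum. intros i. now apply Rmult_le_pos.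
Qed.

Lemma convpow_series (a : nat -> R) (s A B : R) (j : nat) :
  (forall k, 0 <= a k) -> 0 <= s ->
  is_series (gf_term a s) A -> is_series (xgf_term a s) B ->
  is_series (gf_term (convpow a j) s) (A ^ j)
  /\ is_series (xgf_term (convpow a j) s) (INR j * A ^ pred j * B).
Proof.
  intros Ha Hs HA HB. induction j as [|j [IHA IHB]].
  - split.
    + eapply is_series_ext_R; [|apply (is_series_at_0 1)].
      intros k. unfold gf_term. destruct k; simpl; ring.
    + eapply is_series_ext_R; [|apply (is_series_at_0 (0 * 1 * B))].
      intros k. unfold xgf_term. destruct k; simpl; ring.
  - pose proof (convpow_nonneg a j Ha) as Hj.
    split.
    + eapply is_series_ext_R; [intros k; symmetry; apply conv_gf_term|].
      apply is_series_mult_pos; auto; intros k; apply gf_term_nonneg; auto.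
    + eapply is_series_ext_R; [intros k; symmetry; apply conv_xgf_term|].
      replace (INR (S j) * A ^ pred (S j) * B) with (B * A ^ j + A * (INR j * A ^ pred j * B))
        by (destruct j; [simpl; ring|rewrite (S_INR (S j)); simpl; ring]).
      apply is_series_add; apply is_series_mult_pos; auto; intros k;
        first [apply gf_term_nonneg | apply xgf_term_nonneg]; auto.
Qed.

Lemma step_nonneg (m : nat) (a : nat -> R) :
  (forall k, 0 <= a k) -> forall k, 0 <= step m a k.
Proof.
  intros Ha k. pose proof (convpow_nonneg a m Ha) as HY.
  unfold step. destruct (Nat.eqb k 0); [apply Rplus_le_le_0_compat|]; apply HY.
Qed.

Lemma step_series (m : nat) (a : nat -> R) (s A B : R) :
  (forall k, 0 <= a k) -> 0 < s ->
  is_series (gf_term a s) A -> is_series (xgf_term a s) B ->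
  is_series (gf_term (step m a) s) (convpow a m 0 + (A ^ m - convpow a m 0) / s)
  /\ is_series (xgf_term (step m a) s) ((INR m * A ^ pred m * B - A ^ m + convpow a m 0) / s).
Proof.
  intros Ha Hs HA HB. assert (Hs0 : s <> 0) by lra.
  destruct (convpow_series a s A B m Ha ltac:(lra) HA HB) as [HYA HYB].
  set (Y := convpow a m) in *.
  pose proof (is_series_shift _ _ HYA) as SA. pose proof (is_series_shift _ _ HYB) as SB.
  unfold gf_term, xgf_term in SA, SB. cbn [pow] in SA, SB. split.
  - replace ((A ^ m - Y 0%nat) / s) with (/ s * (A ^ m - Y 0%nat * 1)) by (field; exact Hs0).
    eapply is_series_ext_R; [|apply is_series_add; [apply is_series_at_0|apply is_series_mul, SA]].
    intros k. unfold gf_term, step. fold Y. destruct k; cbn [Nat.eqb pow]; field; exact Hs0.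
  - replace ((INR m * A ^ pred m * B - A ^ m + Y 0%nat) / s)
      with (/ s * ((INR m * A ^ pred m * B - 0 * Y 0%nat * 1) - (A ^ m - Y 0%nat * 1)))
      by (field; exact Hs0).
    eapply is_series_ext_R; [|apply is_series_mul, is_series_sub; [apply SB|apply SA]].
    intros k. unfold xgf_term, step. fold Y. rewrite S_INR.
    destruct k; cbn [Nat.eqb pow INR]; field; exact Hs0.
Qed.

Lemma INR_ge_2 (m : nat) : (2 <= m)%nat -> 2 <= INR m.
Proof. intros Hm. replace 2 with (INR 2) by (simpl; ring). now apply le_INR. Qed.

Lemma exp_le (x y : R) : x <= y -> exp x <= exp y.
Proof.
  intros Hxy. destruct (Rle_lt_or_eq_dec x y Hxy) as [Hlt| ->]; [|lra].
  left. now apply exp_increasing.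
Qed.

(* If ln X <= ln Y + K then X (1 - K) <= Y, as e^(-K) >= 1 - K. *)
Lemma mul_one_minus_le_of_ln (X Y K : R) :
  0 < X -> 0 < Y -> ln X <= ln Y + K -> X * (1 - K) <= Y.
Proof.
  intros HX HY Hln.
  assert (HXY : X * exp (- K) <= Y).
  { rewrite <- (exp_ln X), <- (exp_ln Y), <- exp_plus by lra.
    apply exp_le. lra. }
  pose proof (exp_ineq1_le (- K)). nra.
Qed.

Lemma gf_ge_1 (a : nat -> R) (s G : R) :
  (forall k, 0 <= a k) -> is_series (gf_term a 1) 1 -> 1 <= s ->
  is_series (gf_term a s) G -> 1 <= G.
Proof.
  intros Ha H1 Hs HG. apply (is_series_le (gf_term a 1) (gf_term a s)); [intros k|exact H1|exact HG].
  apply Rmult_le_compat_l; [apply Ha|]. apply pow_incr; lra.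
Qed.

Definition admissible (m : nat) (a : nat -> R) : Prop :=
  (forall k, 0 <= a k) /\ is_series (gf_term a 1) 1
  /\ exists A B, is_series (gf_term a (INR m)) A /\ is_series (xgf_term a (INR m)) B
                 /\ 0 <= (INR m - 1) * B - A.

(* The recursion preserves admissibility, since delta_(n+1) = H_n(m)^(m-1) delta_n. *)
Lemma step_admissible (m : nat) (a : nat -> R) :
  (2 <= m)%nat -> admissible m a -> admissible m (step m a).
Proof.
  intros Hm [Ha [H1 [A [B [HA [HB Hd]]]]]]. pose proof (INR_ge_2 m Hm) as HM.
  assert (HA1 : 1 <= A) by (apply (gf_ge_1 a (INR m)); auto; lra).
  assert (EB1 : ex_series (xgf_term a 1))
    by (apply (ex_xgf_series_le a 1 (INR m)); [auto|lra|now exists B]).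
  pose proof (Series_correct _ EB1) as HB1.
  destruct (step_series m a 1 1 _ Ha ltac:(lra) H1 HB1) as [Hmass _].
  destruct (step_series m a (INR m) A B Ha ltac:(lra) HA HB) as [HA' HB'].
  split; [apply step_nonneg, Ha|split].
  - replace 1 with (convpow a m 0 + (1 ^ m - convpow a m 0) / 1) at 2 by (rewrite pow1; field).
    exact Hmass.
  - eexists; eexists. split; [exact HA'|split; [exact HB'|]].
    destruct m as [|m']; [lia|]. cbn [pred]. set (M := INR (S m')) in *.
    replace ((M - 1) * ((M * A ^ m' * B - A ^ S m' + convpow a (S m') 0) / M)
             - (convpow a (S m') 0 + (A ^ S m' - convpow a (S m') 0) / M))
      with (A ^ m' * ((M - 1) * B - A)) by (simpl; field; lra).
    apply Rmult_le_pos; [apply pow_le; lra|exact Hd].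
Qed.

(* Moments of the law q of X_0^* : E_q(m^k) = A is finite (as q_0 = 0, m^k <= k m^k), and
   the quantity E_q[((m-1) k - 1) m^k] = (m-1) l - A defining p_c is nonnegative. *)
Lemma law_star_moments (m : nat) (q : nat -> R) (l : R) :
  (2 <= m)%nat -> (forall k, 0 <= q k) -> q 0%nat = 0 -> is_series (xgf_term q (INR m)) l ->
  exists A, is_series (gf_term q (INR m)) A /\ 0 <= (INR m - 1) * l - A
            /\ pc m q = 1 / (1 + ((INR m - 1) * l - A)).
Proof.
  intros Hm Hq Hq0 HB. pose proof (INR_ge_2 m Hm) as HM.
  assert (EA : ex_series (gf_term q (INR m))).
  { apply (ex_series_dominated _ (xgf_term q (INR m))); [|now exists l].
    intros [|k]; unfold gf_term, xgf_term.
    - rewrite Hq0. simpl. lra.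
    - assert (0 <= q (S k) * INR m ^ S k) by (apply (gf_term_nonneg q); auto; lra).
      rewrite S_INR. pose proof (pos_INR k). nra. }
  exists (Series (gf_term q (INR m))). pose proof (Series_correct _ EA) as HA.
  set (A := Series (gf_term q (INR m))) in *.
  assert (HE : is_series (fun k => ((INR m - 1) * INR k - 1) * INR m ^ k * q k)
                         ((INR m - 1) * l - A)).
  { eapply is_series_ext_R; [|apply is_series_sub; [apply is_series_mul, HB|exact HA]].
    intros k. unfold gf_term, xgf_term. ring. }
  split; [exact HA|split].
  - apply (is_series_le (fun k => if Nat.eqb k 0 then 0 else 0)
                        (fun k => ((INR m - 1) * INR k - 1) * INR m ^ k * q k));
      [intros k|apply is_series_at_0|exact HE].
    destruct k as [|k]; [simpl; rewrite Hq0; lra|cbn [Nat.eqb]].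
    apply Rmult_le_pos; [apply Rmult_le_pos; [|apply pow_le; lra]|apply Hq].
    rewrite S_INR. pose proof (pos_INR k). nra.
  - unfold pc. now rewrite (ser_is_series _ _ HE).
Qed.

(* The initial law (1 - p) delta_0 + p q is admissible precisely because p > p_c: its delta
   equals p (1 + E_q[((m-1) k - 1) m^k]) - 1. *)
Lemma law0_admissible (m : nat) (q : nat -> R) (p : R) :
  (2 <= m)%nat -> (forall k, 0 <= q k) -> infinite_sum q 1 -> q 0%nat = 0 ->
  (exists l, infinite_sum (fun k => INR k * INR m ^ k * q k) l) ->
  pc m q < p -> p <= 1 -> admissible m (law0 p q).
Proof.
  intros Hm Hq Hmass Hq0 [l Hl] Hp Hp1.
  assert (HB : is_series (xgf_term q (INR m)) l).
  { apply is_series_Reals in Hl. eapply is_series_ext_R; [|exact Hl].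
    intros k. unfold xgf_term. ring. }
  destruct (law_star_moments m q l Hm Hq Hq0 HB) as [A [HA [HE0 Hpc_eq]]].
  rewrite Hpc_eq in Hp.
  assert (Hpc : 1 < p * (1 + ((INR m - 1) * l - A))).
  { apply (Rmult_lt_compat_r (1 + ((INR m - 1) * l - A))) in Hp; [|lra].
    unfold Rdiv in Hp. rewrite Rmult_1_l, Rinv_l in Hp; lra. }
  assert (Hp0 : 0 < p) by nra.
  assert (Hmass' : is_series (gf_term q 1) 1).
  { apply is_series_Reals in Hmass. eapply is_series_ext_R; [|exact Hmass].
    intros k. unfold gf_term. rewrite pow1. ring. }
  assert (Hgf : forall s k, (if Nat.eqb k 0 then 1 - p else 0) + p * gf_term q s k
                            = gf_term (law0 p q) s k).
  { intros s k. unfold gf_term, law0. destruct k; simpl; [rewrite Hq0|]; ring. }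
  split; [|split].
  - intros k. unfold law0. destruct (Nat.eqb k 0); [lra|].
    apply Rmult_le_pos; [lra|apply Hq].
  - replace 1 with ((1 - p) + p * 1) at 2 by ring.
    eapply is_series_ext_R; [apply Hgf|].
    apply is_series_add; [apply is_series_at_0|apply is_series_mul, Hmass'].
  - exists ((1 - p) + p * A), (p * l). split; [|split].
    + eapply is_series_ext_R; [apply Hgf|].
      apply is_series_add; [apply is_series_at_0|apply is_series_mul, HA].
    + eapply is_series_ext_R; [|apply is_series_mul, HB].
      intros k. unfold xgf_term, law0. destruct k; simpl; [rewrite Hq0|]; ring.
    + nra.
Qed.

Lemma lawn_admissible (m : nat) (q : nat -> R) (p : R) (n : nat) :
  (2 <= m)%nat -> (forall k, 0 <= q k) -> infinite_sum q 1 -> q 0%nat = 0 ->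
  (exists l, infinite_sum (fun k => INR k * INR m ^ k * q k) l) ->
  pc m q < p -> p <= 1 -> admissible m (lawn m p q n).
Proof.
  intros Hm Hq Hmass Hq0 Hmom Hp Hp1. induction n as [|n IH].
  - now apply law0_admissible.
  - now apply (step_admissible m (lawn m p q n)).
Qed.

Lemma admissible_series (m : nat) (a : nat -> R) (s : R) :
  admissible m a -> 0 <= s <= INR m ->
  is_series (gf_term a s) (ser (gf_term a s)) /\ is_series (xgf_term a s) (ser (xgf_term a s)).
Proof.
  intros [Ha [_ [A [B [HA [HB _]]]]]] Hs. split; apply is_series_ser.
  - apply (ex_gf_series_le a s (INR m)); [auto|auto|now exists A].
  - apply (ex_xgf_series_le a s (INR m)); [auto|auto|now exists B].
Qed.

Definition Phi (m : nat) (a : nat -> R) (s : R) : R :=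
  (INR m - 1) * ser (xgf_term a s) - ser (gf_term a s).

Lemma Phi_m_nonneg (m : nat) (a : nat -> R) : admissible m a -> 0 <= Phi m a (INR m).
Proof.
  intros [_ [_ [A [B [HA [HB Hd]]]]]]. unfold Phi.
  now rewrite (ser_is_series _ _ HA), (ser_is_series _ _ HB).
Qed.

Definition phi_coef (m : nat) (a : nat -> R) (k : nat) : R := ((INR m - 1) * INR k - 1) * a k.

Lemma Phi_series (m : nat) (a : nat -> R) (s : R) :
  admissible m a -> 0 <= s <= INR m -> is_series (fun k => phi_coef m a k * s ^ k) (Phi m a s).
Proof.
  intros Hadm Hs. destruct (admissible_series m a s Hadm Hs) as [HG HxG].
  eapply is_series_ext_R; [|apply is_series_sub; [apply is_series_mul, HxG|exact HG]].
  intros k. unfold phi_coef, gf_term, xgf_term. ring.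
Qed.

Lemma phi_coef_0 (m : nat) (a : nat -> R) : 0 <= a 0%nat -> phi_coef m a 0 <= 0.
Proof. intros Ha0. unfold phi_coef. simpl. lra. Qed.

Lemma phi_coef_S (m : nat) (a : nat -> R) (k : nat) :
  (2 <= m)%nat -> 0 <= a (S k) -> 0 <= phi_coef m a (S k).
Proof.
  intros Hm Ha. pose proof (INR_ge_2 m Hm). pose proof (pos_INR k).
  apply Rmult_le_pos; [rewrite S_INR; nra|exact Ha].
Qed.

Lemma power_series_monotone (c : nat -> R) (s t Ls Lt : R) :
  c 0%nat <= 0 -> (forall k, 0 <= c (S k)) -> 0 < s <= t ->
  is_series (fun k => c k * s ^ k) Ls -> is_series (fun k => c k * t ^ k) Lt ->
  Ls <= Lt /\ Ls / s <= Lt / t.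
Proof.
  intros Hc0 Hc Hst HLs HLt. split.
  - apply (is_series_le (fun k => c k * s ^ k) (fun k => c k * t ^ k)); [|exact HLs|exact HLt].
    intros [|k]; [simpl; lra|]. apply Rmult_le_compat_l; [apply Hc|apply pow_incr; lra].
  - unfold Rdiv. rewrite (Rmult_comm Ls), (Rmult_comm Lt).
    apply (is_series_le (fun k => / s * (c k * s ^ k)) (fun k => / t * (c k * t ^ k)));
      [|apply is_series_mul, HLs|apply is_series_mul, HLt].
    intros [|k].
    + assert (/ t <= / s) by (apply Rinv_le_contravar; lra). simpl. nra.
    + replace (/ s * (c (S k) * s ^ S k)) with (c (S k) * s ^ k) by (simpl; field; lra).
      replace (/ t * (c (S k) * t ^ S k)) with (c (S k) * t ^ k) by (simpl; field; lra).
      apply Rmult_le_compat_l; [apply Hc|apply pow_incr; lra].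
Qed.

Lemma Phi_monotone (m : nat) (a : nat -> R) (s t : R) :
  (2 <= m)%nat -> admissible m a -> 0 < s -> s <= t -> t <= INR m ->
  Phi m a s <= Phi m a t /\ Phi m a s / s <= Phi m a t / t.
Proof.
  intros Hm Hadm Hs Hst Ht. pose proof Hadm as [Ha _].
  apply (power_series_monotone (phi_coef m a)).
  - apply phi_coef_0, Ha.
  - intros k. apply phi_coef_S; auto.
  - lra.
  - apply Phi_series; auto; lra.
  - apply Phi_series; auto; lra.
Qed.

Definition gf_partial (a : nat -> R) (N : nat) (x : R) : R := sum_f_R0 (gf_term a x) N.
Definition gf_partial' (a : nat -> R) (N : nat) (x : R) : R :=
  sum_f_R0 (fun k => a k * (INR k * x ^ pred k)) N.

Lemma gf_partial_derive (a : nat -> R) (N : nat) (x : R) :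
  is_derive (gf_partial a N) x (gf_partial' a N x).
Proof.
  apply (is_derive_ext (fun y => sum_n (fun k => gf_term a y k) N));
    [intros y; apply sum_n_Reals|].
  unfold gf_partial'. rewrite <- sum_n_Reals.
  apply (is_derive_sum_n (fun k y => gf_term a y k)). intros k _. unfold gf_term. auto_derive; [easy|ring].
Qed.

Lemma x_gf_partial' (a : nat -> R) (N : nat) (x : R) :
  x * gf_partial' a N x = sum_f_R0 (xgf_term a x) N.
Proof.
  unfold gf_partial'. rewrite scal_sum. apply sum_eq. intros [|k] _; unfold xgf_term; simpl; ring.
Qed.

Lemma gf_partial_mono (a : nat -> R) (N : nat) (x : R) :
  (forall k, 0 <= a k) -> 1 <= x -> gf_partial a N 1 <= gf_partial a N x.
Proof.
  intros Ha Hx. apply sum_Rle. intros k _. apply Rmult_le_compat_l; [apply Ha|].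
  apply pow_incr; lra.
Qed.

Lemma gf_partial_lim (m : nat) (a : nat -> R) (x : R) :
  admissible m a -> 0 <= x <= INR m ->
  is_lim_seq (fun N => gf_partial a N x) (ser (gf_term a x)).
Proof.
  intros Hadm Hx. destruct (admissible_series m a x Hadm Hx) as [HG _].
  apply (is_lim_seq_ext (sum_n (gf_term a x))); [intros N; apply sum_n_Reals|exact HG].
Qed.

Section LogBound.

Variables (m : nat) (a : nat -> R).
Hypotheses (Hm : (2 <= m)%nat) (Hadm : admissible m a).

(* G >= 1 on [1, m]; so the logarithms taken below are of positive numbers. *)
Lemma gf_ge_1_on (s : R) : 1 <= s <= INR m -> 1 <= ser (gf_term a s).
Proof.
  intros Hs. pose proof Hadm as [Ha [H1 _]].
  destruct (admissible_series m a s Hadm ltac:(lra)) as [HG _].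
  exact (gf_ge_1 a s _ Ha H1 (proj1 Hs) HG).
Qed.

Lemma phi_partial (N : nat) (x : R) :
  sum_f_R0 (fun k => phi_coef m a k * x ^ k) N
  = (INR m - 1) * (x * gf_partial' a N x) - gf_partial a N x.
Proof.
  rewrite x_gf_partial'. unfold gf_partial. rewrite scal_sum, <- minus_sum.
  apply sum_eq. intros k _. unfold phi_coef, gf_term, xgf_term. ring.
Qed.

Definition log_profile (N : nat) (c x : R) : R :=
  (INR m - 1) * ln (gf_partial a N x) - ln x - c * x.

Lemma log_profile_derive (N : nat) (c x : R) :
  0 < x -> 0 < gf_partial a N x ->
  is_derive (log_profile N c) x
    ((INR m - 1) * (gf_partial' a N x / gf_partial a N x) - / x - c).
Proof.
  intros Hx HG. unfold log_profile.
  pose proof (gf_partial_derive a N x) as HD.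
  auto_derive.
  - repeat split; auto. now exists (gf_partial' a N x).
  - replace (Derive (fun y => gf_partial a N y) x) with (gf_partial' a N x)
      by (symmetry; now apply is_derive_unique).
    field. lra.
Qed.

(* The slope used for g_N: c_N = delta / (m G_N(1)), which tends to delta / m. *)
Definition profile_slope (N : nat) : R := Phi m a (INR m) / (INR m * gf_partial a N 1).

(* The slope c_N makes g_N' <= 0 on [1, m]: by part (i) and since
   G_N(x) >= G_N(1) > 0, we get (m-1) x G_N'(x) - G_N(x) <= phi(x) <= x delta / m
   <= c_N x G_N(x). *)
Lemma log_profile_slope_nonpos (N : nat) (x : R) :
  1 <= x <= INR m -> 0 < gf_partial a N 1 ->
  (INR m - 1) * (gf_partial' a N x / gf_partial a N x) - / x - profile_slope N <= 0.
Proof.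
  intros Hx HG1. unfold profile_slope. pose proof Hadm as [Ha _]. pose proof (INR_ge_2 m Hm) as HM.
  pose proof (Phi_m_nonneg m a Hadm) as Hd.
  pose proof (gf_partial_mono a N x Ha (proj1 Hx)) as HGx.
  assert (Htrunc : sum_f_R0 (fun k => phi_coef m a k * x ^ k) N <= Phi m a x).
  { apply partial_sum_le_series; [|apply Phi_series; auto; lra].
    intros k. apply Rmult_le_pos; [apply phi_coef_S; auto|apply pow_le; lra]. }
  destruct (Phi_monotone m a x (INR m) Hm Hadm ltac:(lra) ltac:(lra) ltac:(lra)) as [_ Hratio].
  rewrite phi_partial in Htrunc.
  set (d := Phi m a (INR m)) in *. set (G := gf_partial a N x) in *.
  set (G1 := gf_partial a N 1) in *. set (D := gf_partial' a N x) in *. set (M := INR m) in *.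
  assert (Hphix : Phi m a x <= x * (d / M)).
  { replace (Phi m a x) with (x * (Phi m a x / x)) by (field; lra).
    apply Rmult_le_compat_l; lra. }
  assert (Hslope : x * (d / M) <= d / (M * G1) * x * G).
  { replace (d / (M * G1) * x * G) with (x * (d / M) * (G / G1)) by (field; lra).
    rewrite <- (Rmult_1_r (x * (d / M))) at 1. apply Rmult_le_compat_l.
    - apply Rmult_le_pos; [lra|]. apply Rdiv_le_0_compat; lra.
    - apply (Rmult_le_reg_r G1); [lra|]. unfold Rdiv. rewrite Rmult_assoc, Rinv_l; lra. }
  replace ((M - 1) * (D / G) - / x - d / (M * G1))
    with (((M - 1) * (x * D) - G - d / (M * G1) * x * G) / (x * G)) by (field; lra).
  assert (Hnum : (M - 1) * (x * D) - G - d / (M * G1) * x * G <= 0) by lra.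
  assert (Hinv : 0 < / (x * G)) by (apply Rinv_0_lt_compat; nra).
  unfold Rdiv at 1. nra.
Qed.

Lemma log_profile_decreasing (N : nat) (s : R) :
  1 <= s <= INR m -> 0 < gf_partial a N 1 ->
  log_profile N (profile_slope N) (INR m) <= log_profile N (profile_slope N) s.
Proof.
  intros Hs HG1. pose proof Hadm as [Ha _].
  destruct (Req_dec s (INR m)) as [->|Hne]; [lra|].
  destruct (MVT_cor3 (log_profile N (profile_slope N))
              (fun y => (INR m - 1) * (gf_partial' a N y / gf_partial a N y) - / y
                        - profile_slope N) s (INR m)) as [y [Hy1 [Hy2 Heq]]]; [lra| |].
  - intros y Hy1 Hy2. apply is_derive_Reals, log_profile_derive; [lra|].
    pose proof (gf_partial_mono a N y Ha ltac:(lra)). lra.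
  - rewrite Heq. pose proof (log_profile_slope_nonpos N y ltac:(lra) HG1). nra.
Qed.

Lemma ln_gf_partial_lim (x : R) :
  1 <= x <= INR m -> is_lim_seq (fun N => ln (gf_partial a N x)) (ln (ser (gf_term a x))).
Proof.
  intros Hx. pose proof (gf_ge_1_on x Hx) as HG1.
  apply is_lim_seq_continuous; [|apply (gf_partial_lim m); auto; lra].
  apply derivable_continuous_pt. exists (/ ser (gf_term a x)). apply derivable_pt_lim_ln. lra.
Qed.

(* Key estimate: g(x) = (m-1) ln G(x) - ln x - delta x / m is non-increasing on [1, m].
   It is the limit of the monotonicity of the g_N, since the slopes c_N tend to delta / m. *)
Lemma gf_log_bound (s : R) :
  1 <= s <= INR m ->
  (INR m - 1) * ln (ser (gf_term a (INR m))) - ln (INR m)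
  <= (INR m - 1) * ln (ser (gf_term a s)) - ln s + Phi m a (INR m) * (INR m - s) / INR m.
Proof.
  intros Hs. pose proof Hadm as [_ [H1 _]]. pose proof (INR_ge_2 m Hm) as HM.
  set (d := Phi m a (INR m)).
  assert (Hmass : is_lim_seq (fun N => gf_partial a N 1) 1).
  { pose proof (gf_partial_lim m a 1 Hadm ltac:(lra)) as Hlim.
    now rewrite (ser_is_series _ _ H1) in Hlim. }
  assert (Hpos : eventually (fun N => 0 < gf_partial a N 1)).
  { apply is_lim_seq_spec in Hmass. destruct (Hmass (mkposreal (1 / 2) ltac:(lra))) as [N0 HN0].
    exists N0. intros N HN. specialize (HN0 N HN). simpl in HN0.
    apply Rabs_def2 in HN0. lra. }
  apply (is_lim_seq_le_loc
           (fun N => (INR m - 1) * ln (gf_partial a N (INR m)) - ln (INR m))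
           (fun N => (INR m - 1) * ln (gf_partial a N s) - ln s
                     + d * (INR m - s) / INR m * / gf_partial a N 1)
           ((INR m - 1) * ln (ser (gf_term a (INR m))) - ln (INR m))
           ((INR m - 1) * ln (ser (gf_term a s)) - ln s + d * (INR m - s) / INR m)).
  - destruct Hpos as [N0 HN0]. exists N0. intros N HN. specialize (HN0 N HN).
    pose proof (log_profile_decreasing N s Hs HN0) as Hdec.
    unfold log_profile, profile_slope in Hdec. fold d in Hdec.
    replace (d * (INR m - s) / INR m * / gf_partial a N 1)
      with (d / (INR m * gf_partial a N 1) * INR m - d / (INR m * gf_partial a N 1) * s)
      by (field; lra).
    lra.
  - apply is_lim_seq_minus'; [|apply is_lim_seq_const].
    apply is_lim_seq_mult'; [apply is_lim_seq_const|]. apply ln_gf_partial_lim. lra.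
  - assert (Hinv : is_lim_seq (fun N => / gf_partial a N 1) 1).
    { replace (Finite 1) with (Rbar_inv 1) by (simpl; now rewrite Rinv_1).
      apply (is_lim_seq_inv _ 1 Hmass). intros H; injection H; lra. }
    pose proof (is_lim_seq_mult' _ _ (d * (INR m - s) / INR m) 1 (is_lim_seq_const _) Hinv)
      as Hslope.
    rewrite Rmult_1_r in Hslope.
    apply is_lim_seq_plus'; [|exact Hslope].
    apply is_lim_seq_minus'; [|apply is_lim_seq_const].
    apply is_lim_seq_mult'; [apply is_lim_seq_const|]. now apply ln_gf_partial_lim.
Qed.

(* Part (ii): the case s = 1 of the key estimate, where G(1) = 1. *)
Lemma gf_m_upper_bound :
  ser (gf_term a (INR m)) <= Rpower (INR m) (1 / (INR m - 1)) * exp (Phi m a (INR m)).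
Proof.
  pose proof Hadm as [_ [H1 _]]. pose proof (INR_ge_2 m Hm) as HM.
  pose proof (Phi_m_nonneg m a Hadm) as Hd.
  pose proof (gf_ge_1_on (INR m) ltac:(lra)) as HGm.
  pose proof (gf_log_bound 1 ltac:(lra)) as Hkey.
  rewrite (ser_is_series _ _ H1), ln_1 in Hkey.
  set (d := Phi m a (INR m)) in *. set (G := ser (gf_term a (INR m))) in *.
  assert (HlnG : ln G <= 1 / (INR m - 1) * ln (INR m) + d).
  { apply (Rmult_le_reg_l (INR m - 1)); [lra|].
    replace ((INR m - 1) * (1 / (INR m - 1) * ln (INR m) + d))
      with (ln (INR m) + (INR m - 1) * d) by (field; lra).
    assert (d * (INR m - 1) / INR m <= (INR m - 1) * d).
    { apply (Rmult_le_reg_r (INR m)); [lra|].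
      replace (d * (INR m - 1) / INR m * INR m) with ((INR m - 1) * d) by (field; lra).
      assert (0 <= (INR m - 1) * d) by nra. nra. }
    lra. }
  unfold Rpower. rewrite <- exp_plus, <- (exp_ln G) by lra. now apply exp_le.
Qed.

(* Part (iii): exponentiate the key estimate and bound delta (m - s) / m crudely. *)
Lemma gf_power_ratio_lower_bound (s : R) :
  1 <= s -> s <= INR m ->
  ser (gf_term a s) ^ (m - 1) / s
  >= ser (gf_term a (INR m)) ^ (m - 1) / INR m
     * (1 - INR m * (INR m - s) * Phi m a (INR m) * exp ((INR m - 1) * Phi m a (INR m))).
Proof.
  intros Hs1 Hs2. pose proof (INR_ge_2 m Hm) as HM.
  pose proof (Phi_m_nonneg m a Hadm) as Hd.
  pose proof (gf_ge_1_on s ltac:(lra)) as HGs. pose proof (gf_ge_1_on (INR m) ltac:(lra)) as HGm.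
  pose proof (gf_log_bound s ltac:(lra)) as Hkey.
  set (d := Phi m a (INR m)) in *.
  set (Gs := ser (gf_term a s)) in *. set (Gm := ser (gf_term a (INR m))) in *.
  assert (Hm1 : INR (m - 1) = INR m - 1) by (rewrite minus_INR; [simpl; ring|lia]).
  assert (HX : 0 < Gm ^ (m - 1) / INR m) by (apply Rdiv_lt_0_compat; [apply pow_lt|]; lra).
  assert (HY : 0 < Gs ^ (m - 1) / s) by (apply Rdiv_lt_0_compat; [apply pow_lt|]; lra).
  assert (Hratio : Gm ^ (m - 1) / INR m * (1 - d * (INR m - s) / INR m) <= Gs ^ (m - 1) / s).
  { apply mul_one_minus_le_of_ln; auto.
    rewrite !ln_div, !ln_pow, Hm1 by (try apply pow_lt; lra). lra. }
  assert (HK : d * (INR m - s) / INR m <= INR m * (INR m - s) * d * exp ((INR m - 1) * d)).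
  { assert (Hexp : 1 <= exp ((INR m - 1) * d)).
    { rewrite <- exp_0 at 1. apply exp_le. nra. }
    assert (HdMs : 0 <= d * (INR m - s)) by nra.
    apply (Rmult_le_reg_r (INR m)); [lra|].
    replace (d * (INR m - s) / INR m * INR m) with (d * (INR m - s)) by (field; lra).
    replace (INR m * (INR m - s) * d * exp ((INR m - 1) * d) * INR m)
      with (d * (INR m - s) * (INR m * INR m * exp ((INR m - 1) * d))) by ring.
    rewrite <- (Rmult_1_r (d * (INR m - s))) at 1. apply Rmult_le_compat_l; [exact HdMs|nra]. }
  apply Rle_ge. nra.
Qed.

End LogBound.

Theorem lemma3p2 (m : nat) (qstar : nat -> R) (p : R) (n : nat)
  (Hm : (2 <= m)%nat)
  (Hq_nonneg : forall k, 0 <= qstar k)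
  (Hq_sum : infinite_sum qstar 1)
  (Hq_0 : qstar 0%nat = 0)
  (Hq_ge2 : exists k, (2 <= k)%nat /\ 0 < qstar k)
  (Hq_mom : exists l, infinite_sum (fun k => INR k * INR m ^ k * qstar k) l)
  (Hp : pc m qstar < p) (Hp1 : p <= 1) :
  (forall s t, 0 < s -> s <= t -> t <= INR m ->
     phi m p qstar n s <= phi m p qstar n t /\
     phi m p qstar n s / s <= phi m p qstar n t / t)
  /\ H m p qstar n (INR m)
       <= Rpower (INR m) (1 / (INR m - 1)) * exp (delta m p qstar n)
  /\ (forall s, 1 <= s -> s <= INR m ->
       H m p qstar n s ^ (m - 1) / s
       >= H m p qstar n (INR m) ^ (m - 1) / INR m
          * (1 - INR m * (INR m - s) * delta m p qstar n
                 * exp ((INR m - 1) * delta m p qstar n))).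
Proof.
  (* H, phi and delta are the generic G, Phi and Phi(m) of the admissible law of X_n. *)
  pose proof (lawn_admissible m qstar p n Hm Hq_nonneg Hq_sum Hq_0 Hq_mom Hp Hp1) as Hadm.
  split; [|split].
  - intros s t Hs Hst Ht. exact (Phi_monotone m _ s t Hm Hadm Hs Hst Ht).
  - exact (gf_m_upper_bound m _ Hm Hadm).
  - intros s Hs1 Hs2. exact (gf_power_ratio_lower_bound m _ Hm Hadm s Hs1 Hs2).
Qed.
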